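(* Let $K$ be a finite field of characteristic $p$ and order $q$, let $s$ be a positive integer with $\gcd(s,q-1)=1$, and let $\tau$ be the permutation of $\mathcal{W}_{K,s}$ defined below. If $|\mathcal{W}_{K,s}|=4$, then $\tau$ does not permute $\mathcal{W}_{K,s}$ as a $4$-cycle.
   Context: $\zeta=\exp(2\pi i/p)$, $\psi(x)=\zeta^{\mathrm{Tr}(x)}$ with $\mathrm{Tr}$ the absolute trace of $K$ to $\mathbb{F}_p$; $W_u=\sum_{x\in K}\psi(x^s-ux)$; $\mathcal{W}_{K,s}=\{W_u:u\in K^\times\}$. Let $\gamma$ be a primitive element of $\mathbb{F}_p$ and $\sigma\in\mathrm{Gal}(\mathbb{Q}(\zeta)/\mathbb{Q})$ with $\sigma(\zeta)=\zeta^\gamma$; it is known that $\sigma(W_u)=W_{\gamma^{1-1/s}u}$ (with $1/s$ the inverse of $s$ mod $p-1$), so $\sigma$ restricts to a permutation $\tau$ of $\mathcal{W}_{K,s}$. *)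

From HB Require Import structures.
From mathcomp Require Import all_boot all_order all_algebra all_field.
Set Implicit Arguments. Unset Strict Implicit. Unset Printing Implicit Defensive.
Import GRing.Theory Num.Theory.
Local Open Scope ring_scope.

Section Weil.
Variables (K : finFieldType) (p : nat).

(* zeta = exp(2 pi i / p) : (p.-root (-1)) = exp(i pi / p) (minimal argument) *)
Definition zetaC : algC := (p.-root (-1)) ^+ 2.

(* absolute trace K -> F_p, with [K : F_p] = logn p #|K| *)
Definition abs_trace (x : K) : K := \sum_(i < logn p #|K|) x ^+ (p ^ i).

Definition trace_nat (x : K) : nat :=
  odflt 0%N (omap (@nat_of_ord p) [pick k : 'I_p | (k%:R : K) == abs_trace x]).

Definition psiC (x : K) : algC := zetaC ^+ trace_nat x.

Definition Wsum (s : nat) (u : K) : algC := \sum_(x : K) psiC (x ^+ s - u * x).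

Definition Wset (s : nat) : seq algC :=
  undup [seq Wsum s u | u <- enum K & u != 0].
End Weil.

(* f permutes the 4-element list S as a 4-cycle: some orbit has 4 distinct elements *)
Definition is_4cycle (f : algC -> algC) (S : seq algC) : Prop :=
  exists2 w, w \in S & uniq [:: w; f w; f (f w); f (f (f w))].

From HB Require Import structures.
From mathcomp Require Import all_boot all_order all_algebra all_field.
From mathcomp Require Import zify.
Import GRing.Theory Num.Theory.
Set Implicit Arguments. Unset Strict Implicit. Unset Printing Implicit Defensive.
Local Open Scope ring_scope.

(* Let N(w) be the number of u <> 0 with W_u = w.  Since sigma(W_u) = W_(c u) for
   a fixed c <> 0 with c^s gamma = gamma^s, sigma preserves N, so if it cycles the
   four values of W_(K,s) then N is constant, say N.  Counting u <> 0 gives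
   4 N = q - 1, and sum_(u <> 0) W_u = q gives N (w + sigma w + sigma^2 w + sigma^3 w)
   = q; the bracket is a rational algebraic integer, so N divides q and q - 1,
   whence N = 1 and q = 5.  In F_5 with s odd, squaring c^s gamma = gamma^s gives
   c^2 = 1, so sigma^2 fixes every W_u: no 4-cycle. *)


Lemma sum_char_eq0 (V : finZmodType) (R : idomainType) (chi : V -> R) (a : V) :
  {morph chi : x y / x + y >-> x * y} -> chi a != 1 -> \sum_x chi x = 0.
Proof.
move=> chiD chi_a; have : \sum_x chi x = chi a * \sum_x chi x.
  rewrite mulr_sumr (reindex_inj (addIr a)) /=.
  by apply: eq_bigr => x _; rewrite chiD mulrC.
move/eqP; rewrite -[X in X == _]mul1r -subr_eq0 -mulrBl mulf_eq0 subr_eq0.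
by rewrite eq_sym (negPf chi_a) => /eqP.
Qed.

Lemma zetaC_prim (p : nat) : prime p -> p.-primitive_root (zetaC p).
Proof.
move=> pr_p; have p_gt1 := prime_gt1 pr_p.
pose r : algC := p.-root (-1).
have r_p : r ^+ p = -1 by rewrite rootCK // ltnW.
have zeta_p : zetaC p ^+ p = 1 by rewrite exprAC r_p sqrrN expr1n.
have [m prim_m m_dvd] := prim_order_exists (prime_gt0 pr_p) zeta_p.
have /pred2P[m1 | mp] := (primeP pr_p).2 m m_dvd; last by rewrite mp in prim_m.
have /eqP : zetaC p ^+ 1 = 1 by rewrite -m1 prim_expr_order.
rewrite expr1 sqrf_eq1 => /orP[/eqP r1 | /eqP rN1].
  by move: r_p; rewrite /r r1 expr1n => /eqP; rewrite -subr_eq0 opprK -mulr2n pnatr_eq0.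
by have := rootC_lt0 (-1 : algC) p_gt1; rewrite rN1 ltrN10.
Qed.

Section FiniteFieldPowers.
Variable K : finFieldType.

Lemma expf_card_pred (x : K) : x != 0 -> x ^+ #|K|.-1 = 1.
Proof.
move=> x0; apply: (mulIf x0).
by rewrite mul1r -exprSr prednK ?expf_card // ltnW ?finNzRing_gt1.
Qed.

Lemma coprime_expf_inj (s : nat) :
  (0 < s)%N -> coprime s #|K|.-1 -> injective (fun x : K => x ^+ s).
Proof.
move=> s_gt0 cop x y /= xy_s.
have q1_gt0 : (0 < #|K|.-1)%N by rewrite ltn_predRL finNzRing_gt1.
have [a _] := Bezoutr s q1_gt0; rewrite (eqP cop) => dvd1.
have inv (z : K) : z != 0 -> z * (z ^+ s) ^+ a = 1.
  by move=> z0; rewrite -exprM -exprS -add1n mulnC (expr_dvd (expf_card_pred z0)).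
have eq0_s (z : K) : (z ^+ s == 0) = (z == 0) by rewrite expf_eq0 s_gt0.
have [x0 | x0] := eqVneq x 0.
  by move/eqP: (x0); rewrite -eq0_s xy_s eq0_s => /eqP ->.
have y0 : y != 0 by rewrite -eq0_s -xy_s eq0_s.
apply: (mulIf (expf_neq0 a (expf_neq0 s y0))).
by rewrite inv // -xy_s inv.
Qed.

End FiniteFieldPowers.

Lemma perm_mulf_nonzero (K : finFieldType) (c : K) :
  c != 0 -> perm_eq [seq c * u | u <- enum K & u != 0] [seq u <- enum K | u != 0].
Proof.
move=> c0; have nz_uniq := filter_uniq (fun u : K => u != 0) (enum_uniq K).
apply: uniq_perm => //; first by rewrite map_inj_uniq //; apply: mulfI.
move=> u; rewrite mem_filter mem_enum andbT; apply/mapP/idP => [[v] | u0].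
  by rewrite mem_filter => /andP[v0 _] ->; rewrite mulf_neq0.
exists (c^-1 * u); last by rewrite mulVKf.
by rewrite mem_filter mem_enum mulf_neq0 ?invr_eq0.
Qed.

Lemma prim_root_neq0 (R : nzRingType) n (z : R) : n.-primitive_root z -> z != 0.
Proof.
move=> z_prim; apply/eqP => z0; have := prim_expr_order z_prim.
by rewrite z0 expr0n gtn_eqF ?(prim_order_gt0 z_prim) // => /eqP; rewrite eq_sym oner_eq0.
Qed.

Section OrbitCounting.
Variables (T : eqType) (f : T -> T) (r : seq T).
Hypothesis perm_fr : perm_eq (map f r) r.

Lemma mem_iter_perm_map x k : x \in r -> iter k f x \in r.
Proof. by move=> xr; elim: k => //= k IHk; rewrite -(perm_mem perm_fr) map_f. Qed.

Lemma count_mem_iter_perm_map x k : injective f -> count_mem (iter k f x) r = count_mem x r.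
Proof.
move=> f_inj; elim: k => //= k <-.
by rewrite -(permP perm_fr) count_map; apply: eq_count => y; rewrite /= (inj_eq f_inj).
Qed.

(* The duplicate-free orbit enumerates [undup r], and multiplicities in [r] are
   constant along it. *)
Lemma sum_perm_map_orbit (V : nmodType) (F : T -> V) x n :
    injective f -> x \in r -> uniq (traject f x n) -> (size (undup r) <= n)%N ->
  \sum_(y <- r) F y = (\sum_(y <- traject f x n) F y) *+ count_mem x r.
Proof.
move=> f_inj xr orbit_uniq size_r.
have orbit_r : {subset traject f x n <= undup r}.
  by move=> _ /trajectP[k _ ->]; rewrite mem_undup mem_iter_perm_map.
rewrite -(size_traject f x n) in size_r.
have [_ /uniq_perm] := uniq_min_size orbit_uniq orbit_r size_r.
move=> /(_ orbit_uniq (undup_uniq r)) orbit_perm.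
rewrite (perm_big _ orbit_perm) -sumrMnl -[LHS]big_undup_iterop_count /=.
apply: eq_big_seq => y; rewrite -(perm_mem orbit_perm).
by move=> /trajectP[k _ ->]; rewrite Monoid.iteropE iter_addr_0 count_mem_iter_perm_map.
Qed.

End OrbitCounting.

Lemma dvdn_Aint_mulrn (x : algC) m n : x \in Aint -> (0 < n)%N -> x *+ n = m%:R -> (n %| m)%N.
Proof.
move=> xA n_gt0 xn.
have x_eq : x = m%:R / n%:R by rewrite -xn -[x *+ n]mulr_natr mulfK ?pnatr_eq0 -?lt0n.
have /natrP[k x_k] : x \in Num.nat.
  by rewrite natrEint Cint_rat_Aint // x_eq ?rpred_div ?rpred_nat ?divr_ge0 ?ler0n.
by apply/dvdnP; exists k; apply/eqP; rewrite -(eqr_nat algC) natrM -x_k -xn mulr_natr.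
Qed.

Lemma card5_sqr_eq1 (K : finFieldType) s (c g : K) :
    #|K| = 5%N -> coprime s #|K|.-1 -> c != 0 -> g != 0 -> c ^+ s * g = g ^+ s ->
  c ^+ 2 = 1.
Proof.
move=> K5 s_coprime c0 g0 cg.
have s_odd : odd s by rewrite -coprimen2 (coprime_dvdr _ s_coprime) // K5.
have sqr_s (x : K) : x != 0 -> x ^+ (s * 2) = x ^+ 2.
  move=> x0; rewrite -(expr_mod _ (expf_card_pred x0)) K5.
  by have := odd_double_half s; rewrite s_odd => s_eq; congr (_ ^+ _); lia.
have := congr1 (fun t => t ^+ 2) cg; rewrite /= exprMn -!exprM !sqr_s //.
by move/(congr1 (fun t => t / g ^+ 2)); rewrite mulfK ?divff ?expf_neq0.
Qed.

Section AbsoluteTrace.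
Variables (K : finFieldType) (p : nat).
Hypothesis pchK : p \in [pchar K].

Let pr_p : prime p := pcharf_prime pchK.
Local Notation n := (logn p #|K|).
Local Notation Tr := (@abs_trace K p).

Lemma logn_card_gt0 : (0 < n)%N.
Proof.
have := finNzRing_gt1 K; rewrite {1}(card_pprimeChar pchK).
by case: n => //; rewrite expn0.
Qed.

Lemma exprD_pchar_exp i (x y : K) : (x + y) ^+ (p ^ i) = x ^+ (p ^ i) + y ^+ (p ^ i).
Proof. by apply: exprDn_pchar; rewrite (eq_pnat _ (pcharf_eq pchK)) pnatX pnat_id. Qed.

Lemma natr_exp_pchar_exp i k : (k%:R : K) ^+ (p ^ i) = k%:R.
Proof.
elim: i => [|i IH]; first by rewrite expr1.
by rewrite expnSr exprM IH -(pFrobenius_autE pchK) pFrobenius_aut_nat.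
Qed.

Lemma natr_eq_pchar k j : ((k%:R : K) == j%:R) = (k == j %[mod p]).
Proof.
wlog le_kj : k j / (k <= j)%N.
  move=> le_eq; case: (leqP k j) => [/le_eq // | /ltnW/le_eq].
  by rewrite eq_sym => ->; rewrite eq_sym.
by rewrite eq_sym -subr_eq0 -natrB // -(dvdn_pcharf pchK) eq_sym eqn_mod_dvd.
Qed.

(* The [p] distinct elements [k%:R], [k < p], already exhaust the roots of ['X^p - 'X]. *)
Lemma Frobenius_fixed_natr (y : K) : y ^+ p = y -> exists k : 'I_p, (k%:R : K) = y.
Proof.
move=> yp; have [k /eqP | y_new] := pickP (fun k : 'I_p => k%:R == y); first by exists k.
exfalso.
pose P : {poly K} := 'X^p - 'X.
have sizeP : size P = p.+1.
  by rewrite size_polyDl ?size_polyXn // size_polyN size_polyX ltnS prime_gt1.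
pose roots := y :: [seq (k%:R : K) | k <- iota 0 p].
suff : (size roots < size P)%N by rewrite sizeP /= size_map size_iota ltnn.
apply: max_poly_roots; first by rewrite -size_poly_eq0 sizeP.
  apply/allP => z; rewrite inE => /predU1P[-> | /mapP[k _ ->]]; rewrite /root !hornerE.
    by rewrite yp subrr.
  by rewrite -(pFrobenius_autE pchK) pFrobenius_aut_nat subrr.
rewrite /= map_inj_in_uniq ?iota_uniq ?andbT.
  apply/mapP => -[k]; rewrite mem_iota add0n => lt_kp yk.
  by have := y_new (Ordinal lt_kp); rewrite /= -yk eqxx.
move=> a b; rewrite !mem_iota !add0n => lt_ap lt_bp /eqP.
by rewrite natr_eq_pchar !modn_small // => /eqP.
Qed.

Lemma abs_traceD : {morph Tr : x y / x + y}.
Proof.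
move=> x y; rewrite /abs_trace -big_split.
by apply: eq_bigr => i _; rewrite exprD_pchar_exp.
Qed.

Lemma abs_trace_natrM k x : Tr (k%:R * x) = k%:R * Tr x.
Proof.
rewrite /abs_trace mulr_sumr.
by apply: eq_bigr => i _; rewrite exprMn natr_exp_pchar_exp.
Qed.

Lemma abs_trace0 : Tr 0 = 0.
Proof. by have := abs_trace_natrM 0 0; rewrite !mul0r. Qed.

Lemma abs_trace_Frobenius x : Tr x ^+ p = Tr x.
Proof.
rewrite /abs_trace -(pFrobenius_autE pchK) rmorph_sum /=.
under eq_bigr do rewrite pFrobenius_autE -exprM -expnSr.
have [m n_eq] : exists m, n = m.+1 by exists n.-1; rewrite prednK // logn_card_gt0.
rewrite n_eq big_ord_recr big_ord_recl /= -n_eq -(card_pprimeChar pchK) expf_card addrC.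
by rewrite expn0 expr1.
Qed.

(* [Tr] is a polynomial function of degree [p ^ n.-1 < #|K|] with linear coefficient [1]. *)
Lemma abs_trace_neq0 : exists a, Tr a != 0.
Proof.
apply/existsP; apply: contraT => /existsPn /= Tr0.
pose T : {poly K} := \sum_(i < n) 'X^(p ^ i).
have [m n_eq] : exists m, n = m.+1 by exists n.-1; rewrite prednK // logn_card_gt0.
have T1 : T`_1 = 1.
  rewrite coef_sum n_eq big_ord_recl /= expn0 coefXn eqxx big1 ?addr0 // => i _.
  by rewrite coefXn -[1%N](expn0 p) eqn_exp2l ?prime_gt1.
have T_neq0 : T != 0 by apply: contra_eq_neq T1 => ->; rewrite coef0 eq_sym oner_neq0.
have : (size (enum K) < size T)%N.
  apply: max_poly_roots; last exact: enum_uniq; first exact: T_neq0.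
  apply/allP => x _; rewrite /root horner_sum.
  by under eq_bigr do rewrite hornerXn; rewrite (negbNE (Tr0 x)).
rewrite -cardE ltnNge (leq_trans (size_sum _ _ _)) //.
apply/bigmax_leqP => i _; rewrite size_polyXn.
by have := ltn_ord i; rewrite -(ltn_exp2l _ _ (prime_gt1 pr_p)) -(card_pprimeChar pchK).
Qed.

Lemma trace_natE x : (trace_nat p x)%:R = Tr x.
Proof.
rewrite /trace_nat; case: pickP => [k /eqP -> // | no_k].
have [k k_Tr] := Frobenius_fixed_natr (abs_trace_Frobenius x).
by have := no_k k; rewrite /= k_Tr eqxx.
Qed.

End AbsoluteTrace.

Section AdditiveCharacter.
Variables (K : finFieldType) (p : nat).
Hypothesis pchK : p \in [pchar K].

Let zeta_prim : p.-primitive_root (zetaC p) := zetaC_prim (pcharf_prime pchK).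

Lemma psiC_exp m (x : K) : (m%:R : K) = abs_trace p x -> psiC p x = zetaC p ^+ m.
Proof.
move=> m_Tr; rewrite /psiC; apply/eqP; rewrite (eq_prim_root_expr zeta_prim).
by rewrite -(natr_eq_pchar pchK) (trace_natE pchK) m_Tr.
Qed.

Lemma psiCD : {morph @psiC K p : x y / x + y >-> x * y}.
Proof.
move=> x y; rewrite (@psiC_exp (trace_nat p x + trace_nat p y)) ?exprD //.
by rewrite natrD !(trace_natE pchK) (abs_traceD pchK).
Qed.

Lemma psiC0 : psiC p (0 : K) = 1.
Proof. by rewrite (@psiC_exp 0) ?(abs_trace0 pchK). Qed.

Lemma psiC_natrM k (x : K) : psiC p (k%:R * x) = zetaC p ^+ (k * trace_nat p x).
Proof.
rewrite (@psiC_exp (k * trace_nat p x)) //.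
by rewrite natrM (trace_natE pchK) (abs_trace_natrM pchK).
Qed.

Lemma psiC_Aint (x : K) : psiC p x \in Aint.
Proof.
apply/rpredX/(Aint_unity_root (prim_order_gt0 zeta_prim)).
by rewrite unity_rootE (prim_expr_order zeta_prim).
Qed.

Lemma sum_psiC : \sum_(x : K) psiC p x = 0.
Proof.
have [a Tr_a] := abs_trace_neq0 pchK.
apply: (sum_char_eq0 psiCD (a := a)).
rewrite -(expr0 (zetaC p)) (eq_prim_root_expr zeta_prim).
by rewrite -(natr_eq_pchar pchK) (trace_natE pchK).
Qed.

End AdditiveCharacter.

Section WeilSums.
Variables (K : finFieldType) (p s : nat).
Hypotheses (pchK : p \in [pchar K]) (s_gt0 : (0 < s)%N) (s_coprime : coprime s #|K|.-1).

Local Notation W := (@Wsum K p s).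

Lemma Wsum0 : W 0 = 0.
Proof.
rewrite /Wsum; under eq_bigr do rewrite mul0r subr0.
by rewrite -[RHS](sum_psiC pchK) [RHS](reindex_inj (coprime_expf_inj s_gt0 s_coprime)).
Qed.

Lemma sum_Wsum_neq0 : \sum_(u | u != 0) W u = #|K|%:R.
Proof.
have sum_W : \sum_u W u = #|K|%:R.
  rewrite /Wsum exchange_big (bigD1 0) //= [X in _ + X]big1 => [|x x0].
    under eq_bigr do rewrite expr0n eqn0Ngt s_gt0 mulr0 subr0 (psiC0 pchK).
    by rewrite sumr_const addr0.
  under eq_bigr do rewrite (psiCD pchK).
  rewrite -mulr_sumr [X in _ * X](_ : _ = 0) ?mulr0 //.
  by rewrite -[RHS](sum_psiC pchK) [RHS](reindex_inj (inj_comp (@oppr_inj K) (mulIf x0))).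
by rewrite -sum_W [RHS](bigD1 0) //= Wsum0 add0r.
Qed.

Lemma Wsum_Aint u : W u \in Aint.
Proof. by apply: rpred_sum => x _; apply: psiC_Aint. Qed.

Lemma rmorph_Wsum gamma (sigma : {rmorphism algC -> algC}) :
    sigma (zetaC p) = zetaC p ^+ gamma -> (gamma%:R : K) != 0 ->
  exists c : K, [/\ c != 0, c ^+ s * gamma%:R = gamma%:R ^+ s
                 & forall u, sigma (W u) = W (c * u)].
Proof.
move=> sigma_zeta gamma0.
have [root_s _ root_sK] := injF_bij (coprime_expf_inj s_gt0 s_coprime).
pose l := root_s gamma%:R^-1.
have l_s : l ^+ s = gamma%:R^-1 by rewrite root_sK.
have l0 : l != 0 by move: (invr_neq0 gamma0); rewrite -l_s expf_eq0 s_gt0.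
exists (gamma%:R * l); split; first by rewrite mulf_neq0.
  by rewrite exprMn l_s divfK.
move=> u; rewrite /Wsum rmorph_sum (reindex_inj (mulfI l0)) /=.
apply: eq_bigr => x _.
rewrite /psiC rmorphXn sigma_zeta -exprM -(psiC_natrM pchK).
by congr psiC; rewrite mulrBr exprMn l_s mulrA divff // mul1r !mulrA [_ * u * l]mulrAC.
Qed.

Lemma mem_Wset w : reflect (exists2 u, u != 0 & w = W u) (w \in Wset K p s).
Proof.
rewrite mem_undup; apply: (iffP mapP) => [[u] | [u u0 ->]].
  by rewrite mem_filter mem_enum andbT => u0 ->; exists u.
by exists u; rewrite // mem_filter mem_enum andbT.
Qed.

Lemma card_eq5_of_Wset_4cycle (sigma : {rmorphism algC -> algC}) (c : K) :
    c != 0 -> (forall u, sigma (W u) = W (c * u)) ->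
  size (Wset K p s) = 4%N -> is_4cycle sigma (Wset K p s) -> #|K| = 5%N.
Proof.
move=> c0 sigma_W size_S [w wS orbit_uniq].
pose r := [seq W u | u <- enum K & u != 0].
have sum_r (F : algC -> algC) : \sum_(y <- r) F y = \sum_(u | u != 0) F (W u).
  by rewrite big_map big_filter big_enum_cond.
have perm_r : perm_eq (map sigma r) r.
  by rewrite -map_comp (eq_map sigma_W) map_comp; apply/perm_map/perm_mulf_nonzero.
have wr : w \in r by rewrite -mem_undup.
have sum_orbit (F : algC -> algC) :=
  sum_perm_map_orbit perm_r F (n := 4) (fmorph_inj sigma) wr orbit_uniq (eq_leq size_S).
set N := count_mem w r in sum_orbit.
have N_gt0 : (0 < N)%N by rewrite -has_count has_pred1.
have card_N : #|K|.-1 = (4 * N)%N.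
  have := sum_orbit (fun _ => 1); rewrite sum_r sumr_const cardC1 /= !big_cons big_nil addr0.
  by move/eqP; rewrite (_ : 1 + (1 + (1 + 1)) = 4%:R) // -mulrnA eqr_nat => /eqP.
have orbit_Aint : \sum_(y <- traject sigma w 4) y \in Aint.
  rewrite big_seq rpred_sum // => _ /trajectP[k _ ->].
  by have /mapP[u _ ->] := mem_iter_perm_map perm_r k wr; apply: Wsum_Aint.
have orbit_sum : (\sum_(y <- traject sigma w 4) y) *+ N = #|K|%:R.
  by rewrite -(sum_orbit id) sum_r sum_Wsum_neq0.
have := dvdn_Aint_mulrn orbit_Aint N_gt0 orbit_sum.
have -> : #|K| = (4 * N + 1)%N by have := finNzRing_gt1 K; lia.
by rewrite dvdn_addr ?dvdn_mull // dvdn1 => /eqP N1; rewrite N1.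
Qed.

End WeilSums.

Theorem proposition6p2 (K : finFieldType) (p : nat) (s : nat) (gamma : nat)
    (sigma : {rmorphism algC -> algC}) :
  p \in [pchar K] ->
  (0 < s)%N -> coprime s (#|K| - 1) ->
  (p.-1).-primitive_root (gamma%:R : 'F_p) ->
  sigma (zetaC p) = (zetaC p) ^+ gamma ->
  size (Wset K p s) = 4%N ->
  ~ is_4cycle sigma (Wset K p s).
Proof.
move=> pchK s_gt0 s_coprime gamma_prim sigma_zeta size_S cycle4.
rewrite subn1 in s_coprime.
have gamma0 : (gamma%:R : K) != 0.
  rewrite -(dvdn_pcharf pchK) (dvdn_pcharf (pchar_Fp (pcharf_prime pchK))).
  exact: prim_root_neq0 gamma_prim.
have [c [c0 c_gamma sigma_W]] := rmorph_Wsum pchK s_gt0 s_coprime sigma_zeta gamma0.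
have K5 := card_eq5_of_Wset_4cycle pchK s_gt0 s_coprime c0 sigma_W size_S cycle4.
have c2 := card5_sqr_eq1 K5 s_coprime c0 gamma0 c_gamma.
case: cycle4 => _ /mem_Wset[u _ ->].
by rewrite !sigma_W !mulrA -expr2 c2 mul1r /= !inE eqxx !orbT.
Qed.
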